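(* Let $G$ be a graph with $n$ nodes and $\pi\in S_n$. Then $\pi$ is representable by $G$ if and only if there is no $\mathbf y\in\mathbb{R}^{n-1}$ with $(\Xi R_\pi C_G)^T\mathbf y=\mathbf 0$, $\mathbf y\ge\mathbf 0$ and $\mathbf y\ne\mathbf 0$.
   Context: Graphs are finite directed graphs with nodes $\{0,\dots,n-1\}$; $d_G(x,y)$ is the shortest directed path length from $x$ to $y$ ($\infty$ if none). The distance-count matrix $C_G\in\mathbb{R}^{n\times n}$ has $(C_G)_{i,k}=|\{j: d_G(j,i)=k\}|$ (indices from 0). For $\mathbf a\in\mathbb{R}^{\mathbb{N}}$ the linear centrality is $f^{\mathbf a}_G(i)=\sum_{k=0}^{n-1}(C_G)_{i,k}a_k$. $\pi$ is representable by $G$ if there is $\mathbf a$ with $f^{\mathbf a}_G(\pi(0))>f^{\mathbf a}_G(\pi(1))>\dots>f^{\mathbf a}_G(\pi(n-1))$. $R_\pi$ is the $n\times n$ 0/1 matrix with $(R_\pi)_{ij}=1$ iff $\pi(i)=j$. $\Xi\in\mathbb{R}^{(n-1)\times n}$ is the matrix with $\Xi_{i,i}=-1$, $\Xi_{i,i+1}=1$ for $0\le i\le n-2$, and all other entries $0$. Inequalities between vectors are entrywise. *)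

From HB Require Import structures.
From mathcomp Require Import all_boot all_order all_algebra all_fingroup.
From mathcomp Require Import reals.
Set Implicit Arguments. Unset Strict Implicit. Unset Printing Implicit Defensive.
Import Order.TTheory GRing.Theory Num.Theory.
Local Open Scope ring_scope.

Definition has_walk (n : nat) (e : rel 'I_n) (x y : 'I_n) (k : nat) : bool :=
  [exists t : k.-tuple 'I_n, path e x t && (last x t == y)].

(* d_G(x,y) = k : the shortest directed path from x to y has length k
   (d_G(x,y) = infinity means dist_eq holds for no k) *)
Definition dist_eq (n : nat) (e : rel 'I_n) (x y : 'I_n) (k : nat) : bool :=
  has_walk e x y k && [forall m : 'I_k, ~~ has_walk e x y m].

Definition Cmat (R : nzRingType) (n : nat) (e : rel 'I_n) : 'M[R]_n :=
  \matrix_(i < n, k < n) (#|[set j : 'I_n | dist_eq e j i k]|)%:R.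

Definition lin_centrality (R : nzRingType) (n : nat) (e : rel 'I_n)
  (a : nat -> R) (i : 'I_n) : R :=
  \sum_(k < n) Cmat R e i k * a k.

Definition representable (R : realType) (n : nat) (e : rel 'I_n)
  (pi : 'S_n) : Prop :=
  exists a : nat -> R, forall i j : 'I_n, val j = (val i).+1 ->
    lin_centrality e a (pi j) < lin_centrality e a (pi i).

Definition Rperm (R : nzRingType) (n : nat) (pi : 'S_n) : 'M[R]_n :=
  \matrix_(i < n, j < n) (pi i == j)%:R.

Definition Xi (R : nzRingType) (n : nat) : 'M[R]_(n.-1, n) :=
  \matrix_(i < n.-1, j < n)
    (if val j == val i then -1 else if val j == (val i).+1 then 1 else 0).

From HB Require Import structures.
From mathcomp Require Import all_boot all_order all_algebra all_fingroup.
From mathcomp Require Import reals.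
From mathcomp Require Import ring lra.
Set Implicit Arguments.
Unset Strict Implicit.
Unset Printing Implicit Defensive.
Import Order.TTheory GRing.Theory Num.Theory.
Local Open Scope ring_scope.

(* Representability asks for weights [a] whose centralities [C_G a] strictly
   decrease along [pi], i.e. [M (-a) > 0] entrywise for [M = Xi R_pi C_G]; so
   the theorem is Gordan's alternative for [M]: either [M x > 0] for some [x],
   or [M^T y = 0] for some nonzero [y >= 0], and never both.  Gordan's
   alternative follows by Fourier-Motzkin elimination of the first variable:
   the reduced system consists of the rows with vanishing first coefficient and
   of the positive combinations of pairs of rows whose first coefficients have
   opposite signs.  A solution of the reduced system extends to the original one
   by choosing the eliminated coordinate between finitely many lower and upper
   bounds, and a certificate for the reduced system pulls back along the
   nonnegative combination weights. *)

Lemma sum_delta_mull (R : pzSemiRingType) (I : finType) (p : I) (f : I -> R) :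
  \sum_i (i == p)%:R * f i = f p.
Proof.
rewrite (bigD1 p) //= eqxx mul1r big1 ?addr0 // => i /negbTE ->.
by rewrite mul0r.
Qed.

Section GordanAlternative.
Variable R : realFieldType.

Lemma exists_separating_point (I : finType) (P Q : pred I) (f : I -> R) :
  (forall p q, P p -> Q q -> f p < f q) ->
  exists t, (forall p, P p -> f p < t) /\ (forall q, Q q -> t < f q).
Proof.
move=> ltPQ.
(* The defaults keep [l < u] even when [P] or [Q] is empty. *)
pose u := \big[Order.min/(1 + \big[Order.max/0]_(p | P p) f p)]_(q | Q q) f q.
pose l := \big[Order.max/(u - 1)]_(p | P p) f p.
have lu : l < u.
  apply: bigmax_lt => [|p Pp]; first lra.
  apply: lt_bigmin => [|q Qq]; last exact: ltPQ.
  have := le_bigmax_cond 0 f Pp; lra.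
have [lt_l_mid lt_mid_u] := midf_lt lu.
exists ((l + u) / 2); split => [p Pp | q Qq].
- exact: le_lt_trans (le_bigmax_cond _ _ Pp) lt_l_mid.
- exact: lt_le_trans lt_mid_u (bigmin_le_cond _ _ Qq).
Qed.

Lemma exists_affine_pos (I : finType) (D : pred I) (c s : I -> R) :
  (forall i, D i -> c i = 0 -> 0 < s i) ->
  (forall p q, D p -> D q -> 0 < c p -> c q < 0 ->
     0 < - c q * s p + c p * s q) ->
  exists t, forall i, D i -> 0 < c i * t + s i.
Proof.
move=> s_gt0 pair_gt0.
pose f i := - s i / c i.
have [|t [lower upper]] := @exists_separating_point _
  [pred p | D p && (0 < c p)] [pred q | D q && (c q < 0)] f.
  move=> p q /andP[Dp cp] /andP[Dq cq]; rewrite -subr_gt0.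
  have -> : f q - f p = (- c q * s p + c p * s q) / (c p * - c q).
    by rewrite /f; field; rewrite (lt_eqF cq) (gt_eqF cp).
  by rewrite divr_gt0 ?pair_gt0 // mulr_gt0 // oppr_gt0.
exists t => i Di; case: (ltrgt0P (c i)) => ci.
- have := lower i; rewrite /= Di ci /f ltr_pdivrMr // => /(_ isT); lra.
- have := upper i; rewrite /= Di ci /f ltr_ndivlMr // => /(_ isT); lra.
- by rewrite ci mul0r add0r s_gt0.
Qed.

Definition strictly_feasible (I : finType) (k : nat) (D : pred I)
    (A : I -> 'I_k -> R) :=
  exists x : 'I_k -> R, forall i, D i -> 0 < \sum_j A i j * x j.

Definition semipos_left_kernel (I : finType) (k : nat) (D : pred I)
    (A : I -> 'I_k -> R) :=
  exists2 y : I -> R,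
    [/\ forall i, 0 <= y i, forall i, ~~ D i -> y i = 0 & exists i, 0 < y i]
    & forall j, \sum_i y i * A i j = 0.

Definition row_comb (I J : finType) (k : nat) (W : J -> I -> R)
    (A : I -> 'I_k -> R) (z : J) (j : 'I_k) : R :=
  \sum_i W z i * A i j.

Lemma strictly_feasible_no_kernel (I : finType) (k : nat) (D : pred I)
    (A : I -> 'I_k -> R) :
  strictly_feasible D A -> ~ semipos_left_kernel D A.
Proof.
move=> [x Ax_gt0] [y [y_ge0 y_supp [i yi_gt0]] yA0].
have Di : D i by apply: contraLR yi_gt0 => /y_supp ->; rewrite ltxx.
have yAx_ge0 i' : 0 <= y i' * \sum_j A i' j * x j.
  have [Di'|nDi'] := boolP (D i'); last by rewrite y_supp ?mul0r.
  by rewrite mulr_ge0 ?y_ge0 // ltW ?Ax_gt0.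
have yAx0 : \sum_i' y i' * \sum_j A i' j * x j = 0.
  under eq_bigr do rewrite mulr_sumr.
  rewrite exchange_big big1 // => j _.
  by under eq_bigr do rewrite mulrA; rewrite -mulr_suml yA0 mul0r.
have /eqP := @psumr_eq0P _ _ _ _ (fun i' _ => yAx_ge0 i') yAx0 i isT.
by rewrite mulf_eq0 (gt_eqF yi_gt0) (gt_eqF (Ax_gt0 i Di)).
Qed.

Lemma semipos_left_kernel_row_comb (I J : finType) (k : nat) (D : pred I)
    (E : pred J) (W : J -> I -> R) (A : I -> 'I_k -> R) :
  (forall z i, E z -> 0 <= W z i) ->
  (forall z i, E z -> ~~ D i -> W z i = 0) ->
  (forall z, E z -> exists i, 0 < W z i) ->
  semipos_left_kernel E (row_comb W A) -> semipos_left_kernel D A.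
Proof.
move=> W_ge0 W_supp W_pos [y [y_ge0 y_supp [z yz_gt0]] yWA0].
have yW_ge0 z' i : 0 <= y z' * W z' i.
  have [Ez'|nEz'] := boolP (E z'); last by rewrite y_supp ?mul0r.
  by rewrite mulr_ge0 ?W_ge0.
exists (fun i => \sum_z' y z' * W z' i); first split.
- by move=> i; rewrite sumr_ge0.
- move=> i nDi; apply: big1 => z' _.
  have [Ez'|nEz'] := boolP (E z'); last by rewrite y_supp ?mul0r.
  by rewrite W_supp ?mulr0.
- have Ez : E z by apply: contraLR yz_gt0 => /y_supp ->; rewrite ltxx.
  have [i Wzi_gt0] := W_pos z Ez; exists i.
  rewrite (bigD1 z) //= ltr_pwDl ?mulr_gt0 ?sumr_ge0 //.
- move=> j; rewrite -[RHS](yWA0 j).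
  under eq_bigr do rewrite mulr_suml.
  rewrite exchange_big; apply: eq_bigr => z' _; rewrite mulr_sumr.
  by apply: eq_bigr => i _; rewrite mulrA.
Qed.

Section FourierMotzkinStep.
Variables (I : finType) (k : nat) (D : pred I) (A : I -> 'I_k.+1 -> R).
Let c i := A i ord0.

Definition fm_dom : pred (I + I * I) := fun z =>
  match z with
  | inl i => D i && (c i == 0)
  | inr (p, q) => [&& D p, D q, 0 < c p & c q < 0]
  end.

Definition fm_weight (z : I + I * I) (i : I) : R :=
  match z with
  | inl p => (i == p)%:R
  | inr (p, q) => - c q * (i == p)%:R + c p * (i == q)%:R
  end.

Definition fm_rows (z : I + I * I) (j : 'I_k) : R :=
  row_comb fm_weight A z (lift ord0 j).

Lemma sum_fm_weight z (f : I -> R) :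
  \sum_i fm_weight z i * f i =
  match z with inl p => f p | inr (p, q) => - c q * f p + c p * f q end.
Proof.
case: z => [p | [p q]] /=; first exact: sum_delta_mull.
under eq_bigr do rewrite mulrDl -!mulrA.
by rewrite big_split -!mulr_sumr !sum_delta_mull.
Qed.

Lemma fm_weight_col0 z : fm_dom z -> \sum_i fm_weight z i * c i = 0.
Proof.
rewrite sum_fm_weight; case: z => [p /andP[_ /eqP //] | [p q] _].
by rewrite mulNr mulrC addNr.
Qed.

Lemma fm_strictly_feasible :
  strictly_feasible fm_dom fm_rows -> strictly_feasible D A.
Proof.
move=> [x' rows_x'_gt0].
pose s i := \sum_j A i (lift ord0 j) * x' j.
have rows_x'E z : \sum_j fm_rows z j * x' j = \sum_i fm_weight z i * s i.
  under eq_bigr do rewrite /fm_rows /row_comb mulr_suml.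
  rewrite exchange_big; apply: eq_bigr => i _; rewrite mulr_sumr.
  by apply: eq_bigr => j _; rewrite mulrA.
have [t ct_s_gt0] : exists t, forall i, D i -> 0 < c i * t + s i.
  apply: exists_affine_pos => [i Di ci0 | p q Dp Dq cp cq].
  - have := rows_x'_gt0 (inl i); rewrite rows_x'E sum_fm_weight.
    by apply; rewrite /= Di ci0 eqxx.
  - have := rows_x'_gt0 (inr (p, q)); rewrite rows_x'E sum_fm_weight.
    by apply; rewrite /= Dp Dq cp cq.
exists (fun j => if unlift ord0 j is Some j' then x' j' else t) => i Di.
rewrite big_ord_recl /= unlift_none.
under eq_bigr do rewrite liftK.
exact: ct_s_gt0.
Qed.

Lemma fm_semipos_left_kernel :
  semipos_left_kernel fm_dom fm_rows -> semipos_left_kernel D A.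
Proof.
move=> [y [y_ge0 y_supp y_pos] y_rows0].
apply: (@semipos_left_kernel_row_comb _ _ _ _ fm_dom fm_weight).
- move=> [p | [p q]] i /=; first by rewrite ler0n.
  move=> /and4P[_ _ cp cq].
  by rewrite addr_ge0 ?mulr_ge0 ?oppr_ge0 ?ler0n ?(ltW cp) ?(ltW cq).
- move=> [p | [p q]] i /=.
    move=> /andP[Dp _] nDi.
    by have /negbTE -> : i != p by apply: contraNneq nDi => ->.
  move=> /and4P[Dp Dq _ _] nDi.
  have /negbTE -> : i != p by apply: contraNneq nDi => ->.
  have /negbTE -> : i != q by apply: contraNneq nDi => ->.
  by rewrite !mulr0 addr0.
- move=> [p | [p q]] /=; first by exists p; rewrite eqxx ltr01.
  move=> /and4P[_ _ cp cq]; exists p.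
  have /negbTE -> : p != q by apply: contraTneq cp => ->; rewrite -leNgt ltW.
  by rewrite eqxx mulr0 addr0 mulr1 oppr_gt0.
exists y => // j; case: (unliftP ord0 j) => [j'|] ->; first exact: y_rows0.
apply: big1 => z _.
have [Ez|nEz] := boolP (fm_dom z); last by rewrite y_supp ?mul0r.
by rewrite /row_comb fm_weight_col0 ?mulr0.
Qed.

End FourierMotzkinStep.

Theorem gordan_alternative (k : nat) (I : finType) (D : pred I)
    (A : I -> 'I_k -> R) :
  strictly_feasible D A \/ semipos_left_kernel D A.
Proof.
elim: k I D A => [|k IHk] I D A.
  have [i Di | noD] := pickP D; last first.
    by left; exists (fun=> 0) => i; rewrite noD.
  right; exists (fun i' => (i' == i)%:R); last by case.
  split=> [i' | i' nDi' | ]; first exact: ler0n.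
    by have /negbTE -> : i' != i by apply: contraNneq nDi' => ->.
  by exists i; rewrite eqxx ltr01.
by case: (IHk _ (fm_dom D A) (fm_rows A))
  => [/fm_strictly_feasible | /fm_semipos_left_kernel]; [left | right].
Qed.

Lemma strictly_feasible_iff_no_kernel (k : nat) (I : finType) (D : pred I)
    (A : I -> 'I_k -> R) :
  strictly_feasible D A <-> ~ semipos_left_kernel D A.
Proof.
split; first exact: strictly_feasible_no_kernel.
by have [|//] := gordan_alternative D A.
Qed.

End GordanAlternative.

Lemma strictly_feasible_mx (R : realFieldType) (p q : nat) (M : 'M[R]_(p, q)) :
  strictly_feasible predT M <->
  exists x : 'cV[R]_q, forall i, 0 < (M *m x) i 0.
Proof.
split=> [[x Mx_gt0] | [x Mx_gt0]].
- exists (\col_j x j) => i; rewrite mxE.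
  by under eq_bigr do rewrite mxE; exact: Mx_gt0.
- by exists (fun j => x j 0) => i _; have := Mx_gt0 i; rewrite mxE.
Qed.

Lemma semipos_left_kernel_mx (R : realFieldType) (p q : nat)
    (M : 'M[R]_(p, q)) :
  semipos_left_kernel predT M <->
  exists y : 'cV[R]_p, M^T *m y = 0 /\ (forall i, 0 <= y i 0) /\ y != 0.
Proof.
split=> [[y [y_ge0 _ [i yi_gt0]] yM0] | [y [yM0 [y_ge0 y_neq0]]]].
- exists (\col_i y i); split; [|split].
  + apply/matrixP => j l; rewrite !mxE -[RHS](yM0 j).
    by apply: eq_bigr => i' _; rewrite !mxE mulrC.
  + by move=> i'; rewrite mxE.
  + by apply/matrix0Pn; exists i, 0; rewrite mxE gt_eqF.
- have [i [l yil_neq0]] := matrix0Pn _ y_neq0.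
  exists (fun i => y i 0).
    split=> //; exists i; rewrite lt_def y_ge0 andbT.
    by rewrite (ord1 l) in yil_neq0.
  move=> j; transitivity ((M^T *m y) j 0); last by rewrite yM0 mxE.
  by rewrite mxE; apply: eq_bigr => i' _; rewrite mxE mulrC.
Qed.

Theorem gordan_mx (R : realFieldType) (p q : nat) (M : 'M[R]_(p, q)) :
  (exists x : 'cV[R]_q, forall i, 0 < (M *m x) i 0) <->
  ~ (exists y : 'cV[R]_p, M^T *m y = 0 /\ (forall i, 0 <= y i 0) /\ y != 0).
Proof.
rewrite -strictly_feasible_mx -semipos_left_kernel_mx.
exact: strictly_feasible_iff_no_kernel.
Qed.

Lemma Rperm_mulmx (R : nzRingType) (n p : nat) (pi : 'S_n)
    (M : 'M[R]_(n, p)) i k :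
  (Rperm R pi *m M) i k = M (pi i) k.
Proof.
by rewrite mxE; under eq_bigr do rewrite mxE eq_sym; exact: sum_delta_mull.
Qed.

Lemma Xi_entry (R : nzRingType) (n : nat) (i : 'I_n) (j : 'I_n.+1) :
  Xi R n.+1 i j = (j == lift ord0 i)%:R - (j == widen_ord (leqnSn n) i)%:R.
Proof.
rewrite mxE -!val_eqE /= /bump leq0n add1n.
have [-> | _] := eqVneq (val j) i; first by rewrite ltn_eqF // sub0r.
by case: eqP; rewrite subr0.
Qed.

Lemma Xi_mulmx (R : nzRingType) (n p : nat) (M : 'M[R]_(n.+1, p)) i k :
  (Xi R n.+1 *m M) i k = M (lift ord0 i) k - M (widen_ord (leqnSn n) i) k.
Proof.
rewrite mxE; under eq_bigr do rewrite Xi_entry mulrBl.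
by rewrite sumrB !sum_delta_mull.
Qed.

Lemma lin_centralityE (R : nzRingType) (n : nat) (e : rel 'I_n)
    (a : nat -> R) i :
  lin_centrality e a i = (Cmat R e *m \col_k a k) i 0.
Proof.
by rewrite /lin_centrality [RHS]mxE; apply: eq_bigr => k _; rewrite !mxE.
Qed.

Lemma representable_mx (R : realType) (n : nat) (e : rel 'I_n) (pi : 'S_n) :
  representable R e pi <->
  exists x : 'cV[R]_n,
    forall i, 0 < (Xi R n *m Rperm R pi *m Cmat R e *m x) i 0.
Proof.
case: n e pi => [|m] e pi.
  by split=> _; [exists 0 | exists (fun=> 0)] => -[].
have stepE (a : nat -> R) (i : 'I_m) :
    (Xi R m.+1 *m Rperm R pi *m Cmat R e *m - \col_k a k) i 0 =
    lin_centrality e a (pi (widen_ord (leqnSn m) i))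
    - lin_centrality e a (pi (lift ord0 i)).
  rewrite -!mulmxA mulmxN Xi_mulmx !Rperm_mulmx !lin_centralityE.
  by rewrite [X in X - _ = _]mxE [X in _ - X = _]mxE opprK addrC.
split=> [[a a_decr] | [x x_gt0]].
- exists (- \col_k a k) => i; rewrite stepE subr_gt0.
  by apply: a_decr; rewrite /= /bump leq0n add1n.
pose a k := - x (inord k) 0.
have xE : x = - \col_k a k.
  by apply/matrixP => k l; rewrite !mxE opprK inord_val (ord1 l).
exists a => i j ji.
have lt_im : (i < m)%N by rewrite -ltnS -ji ltn_ord.
have := x_gt0 (Ordinal lt_im); rewrite xE stepE subr_gt0.
have -> : widen_ord (leqnSn m) (Ordinal lt_im) = i by apply: val_inj.
have -> // : lift ord0 (Ordinal lt_im) = j.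
by apply: val_inj; rewrite /= /bump leq0n add1n; exact: esym ji.
Qed.

Theorem theorem6 (R : realType) (n : nat) (e : rel 'I_n) (pi : 'S_n) :
  representable R e pi <->
  ~ (exists y : 'cV[R]_(n.-1),
       (Xi R n *m Rperm R pi *m Cmat R e)^T *m y = 0
       /\ (forall i, 0 <= y i 0) /\ y != 0).
Proof. by rewrite representable_mx; exact: gordan_mx. Qed.
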